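(* Let $R>0$, $t\neq 0$, $c=\frac{1-t^2}{1+t^2}$, $s=\frac{2t}{1+t^2}$, and set $k=1$. Consider the trisector $$T=\{(x,y,z)\in\mathbb{R}^3:\ y^2-(xs-yc)^2+2z-1=0,\ \bigl(x^2-2z+R^2+1\bigr)^2-4R^2(x^2+y^2)=0\}.$$ Then this degree-eight trisector is reducible and splits into two algebraic space curves of degree four. These two quartic components intersect in exactly two real affine points, $$\Bigl(Rc,Rs,\tfrac{1-R^2s^2}{2}\Bigr)\quad\text{and}\quad\Bigl(-Rc,-Rs,\tfrac{1-R^2s^2}{2}\Bigr),$$ and each of these two points is an ordinary real node of the trisector.
   Context: This is the trisector at parameter value $k=1$ of the $x$-axis, the line through $(0,0,1)$ with direction $(c,s,0)$, and the circle of radius $R$ centered at $(0,0,k)$ in the plane $z=k$. An ordinary real node is a point where the curve is locally the union of two smooth branches with distinct tangent lines. *)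

From Stdlib Require Import Reals Lra List.
From Coquelicot Require Import Coquelicot.
Open Scope R_scope.

Definition pt := (R * R * R)%type.

Definition cpar (t : R) : R := (1 - t ^ 2) / (1 + t ^ 2).
Definition spar (t : R) : R := 2 * t / (1 + t ^ 2).

Definition trisector (Rad t : R) (p : pt) : Prop :=
  let '(x, y, z) := p in
  y ^ 2 - (x * spar t - y * cpar t) ^ 2 + 2 * z - 1 = 0 /\
  (x ^ 2 - 2 * z + Rad ^ 2 + 1) ^ 2 - 4 * Rad ^ 2 * (x ^ 2 + y ^ 2) = 0.

(* a polynomial is a finite list of monomials  coef * x^i * y^j * z^k *)
Definition poly3 := list (R * (nat * nat * nat)).

Definition eval3 (P : poly3) (p : pt) : R :=
  let '(x, y, z) := p in
  fold_right (fun (m : R * (nat * nat * nat)) (acc : R) =>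
    fst m * x ^ (fst (fst (snd m))) * y ^ (snd (fst (snd m))) * z ^ (snd (snd m)) + acc) 0 P.

Definition algebraic_set (S : pt -> Prop) : Prop :=
  exists L : list poly3, forall p, S p <-> List.Forall (fun P => eval3 P p = 0) L.

Definition irreducible_set (S : pt -> Prop) : Prop :=
  algebraic_set S /\ (exists p, S p) /\
  forall A B : pt -> Prop, algebraic_set A -> algebraic_set B ->
    (forall p, S p <-> A p \/ B p) ->
    (forall p, S p -> A p) \/ (forall p, S p -> B p).

Definition plane (a b c d : R) (p : pt) : Prop :=
  let '(x, y, z) := p in a * x + b * y + c * z = d.

Definition nonzero3 (a b c : R) : Prop := ~ (a = 0 /\ b = 0 /\ c = 0).

Definition curve_degree (C : pt -> Prop) (n : nat) : Prop :=
  (exists a b c d (l : list pt), nonzero3 a b c /\ NoDup l /\ length l = n /\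
     forall p, (C p /\ plane a b c d p) <-> In p l) /\
  (forall a b c d, nonzero3 a b c ->
     (exists l : list pt, forall p, C p /\ plane a b c d p -> In p l) ->
     forall l : list pt, NoDup l -> (forall p, In p l -> C p /\ plane a b c d p) ->
       (length l <= n)%nat).

Definition smooth_branch (gx gy gz : R -> R) (p : pt) (d : R) : Prop :=
  0 < d /\
  (forall (n : nat) (tau : R), -d <= tau <= d ->
     ex_derive_n gx n tau /\ ex_derive_n gy n tau /\ ex_derive_n gz n tau) /\
  (gx 0, gy 0, gz 0) = p /\
  (forall tau, -d <= tau <= d ->
     ~ (Derive gx tau = 0 /\ Derive gy tau = 0 /\ Derive gz tau = 0)) /\
  (forall t1 t2, -d <= t1 <= d -> -d <= t2 <= d ->
     (gx t1, gy t1, gz t1) = (gx t2, gy t2, gz t2) -> t1 = t2).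

Definition dist2 (p q : pt) : R :=
  let '(x1, y1, z1) := p in let '(x2, y2, z2) := q in
  (x1 - x2) ^ 2 + (y1 - y2) ^ 2 + (z1 - z2) ^ 2.

Definition not_parallel (u1 u2 u3 v1 v2 v3 : R) : Prop :=
  ~ (u2 * v3 - u3 * v2 = 0 /\ u3 * v1 - u1 * v3 = 0 /\ u1 * v2 - u2 * v1 = 0).

Definition ordinary_real_node (C : pt -> Prop) (p : pt) : Prop :=
  C p /\
  exists (eps d : R) (gx1 gy1 gz1 gx2 gy2 gz2 : R -> R),
    0 < eps /\
    smooth_branch gx1 gy1 gz1 p d /\ smooth_branch gx2 gy2 gz2 p d /\
    not_parallel (Derive gx1 0) (Derive gy1 0) (Derive gz1 0)
                 (Derive gx2 0) (Derive gy2 0) (Derive gz2 0) /\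
    forall q, dist2 q p < eps ^ 2 ->
      (C q <-> exists tau, -d < tau < d /\
                 (q = (gx1 tau, gy1 tau, gz1 tau) \/ q = (gx2 tau, gy2 tau, gz2 tau))).

(* In the frame u = x c + y s, v = x s - y c (a reflection of the (x, y)-plane,
   as c^2 + s^2 = 1) the first equation of T reads 2 z = 1 - y^2 + v^2, and as
   x^2 + y^2 = u^2 + v^2 the second one then factors as
   (u^2 - Rad^2 - 2 Rad v) (u^2 - Rad^2 + 2 Rad v) = 0.  So T is the union of the
   curves u^2 - Rad^2 = 2 e Rad v (e = 1, -1) on that surface.  Each is the image
   of an injective polynomial map u |-> (x, y, z) of degree 4: it is irreducible
   because a product of two polynomials vanishing on all of R is zero, a plane
   meets it in the roots of a quartic in u, and the plane z = 1/2 meets it in the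
   four roots of two quadratics.  The curves meet where v = 0, i.e. at u = Rad and
   u = -Rad, and there their tangents (c + s e u / Rad, s - c e u / Rad, _) are not
   parallel because u <> 0. *)

From Stdlib Require Import Reals Lra Psatz List FinFun Classical.
From Coquelicot Require Import Coquelicot.
From mathcomp Require Import all_boot all_algebra zify Rstruct.
Import GRing.Theory Num.Theory.
Open Scope R_scope.

(* MathComp's ring operations on [R] are convertible to Stdlib's but not
   syntactically equal to them, which [lra], [ring] and [field] require. *)
Ltac to_Rstd := rewrite -?RminusE -?RplusE -?RmultE -?RoppE -?RinvE -?RpowE -?R0E -?R1E.

Lemma InP (T : eqType) (x : T) (s : seq T) : reflect (In x s) (x \in s).
Proof.
elim: s => [|y s IH] /=; first by constructor.
rewrite in_cons; apply: (iffP orP) => [[/eqP ->|/IH]|[->|/IH]]; by auto.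
Qed.

Lemma NoDup_uniq (T : eqType) (s : seq T) : NoDup s -> uniq s.
Proof.
elim: s => [|x s IH] //= /NoDup_cons_iff [xNs /IH ->].
by rewrite andbT; apply/negP => /InP.
Qed.

Lemma injective_not_finite (T : Type) (f : R -> T) :
  Injective f -> ~ exists l : list T, forall u, In (f u) l.
Proof.
move=> f_inj [l lf].
pose l' := List.map (fun k => f (INR k)) (List.seq 0 (S (length l))).
have l'_NoDup : NoDup l'.
  by apply: Injective_map_NoDup (seq_NoDup _ _) => m n /f_inj /INR_eq.
have /(NoDup_incl_length l'_NoDup) : incl l' l by move=> _ /in_map_iff [k [<- _]].
by rewrite length_map length_seq => /Nat.nle_succ_diag_l.
Qed.

Lemma poly_eq0_of_horner (p : {poly R}) : (forall u, p.[u] = 0)%R -> p = 0%R.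
Proof.
move=> p0; apply: (@roots_geq_poly_eq0 _ _ [seq i%:R | i <- iota 0 (size p)]%R).
- by apply/allP => x _; apply/rootP.
- by rewrite map_inj_uniq ?iota_uniq // => m n /eqP; rewrite eqr_nat => /eqP.
- by rewrite size_map size_iota.
Qed.

Lemma NoDup_roots_length (p : {poly R}) (l : list R) :
  p != 0%R -> NoDup l -> (forall x, In x l -> p.[x] = 0)%R -> (length l < size p)%N.
Proof.
move=> p0 /NoDup_uniq l_uniq l_roots.
have l_size : size l = length l by elim: l {l_uniq l_roots} => //= x l ->.
rewrite -l_size; apply: max_poly_roots l_uniq => //.
by apply/allP => x /InP /l_roots /rootP.
Qed.

Lemma is_derive_horner (p : {poly R}) x : is_derive (horner p) x (p^`()).[x]%R.
Proof.
elim/poly_ind: p x => [|p a IH] x.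
  rewrite deriv0 horner0; apply: (is_derive_ext (fun=> 0)) => [y|]; first by rewrite horner0.
  exact: is_derive_const.
rewrite derivMXaddC hornerD hornerM hornerX.
apply: (is_derive_ext (fun y => p.[y] * y + a)%R) => [y|]; first by rewrite hornerMXaddC.
have D := is_derive_plus _ _ x _ _
  (is_derive_mult _ _ x _ _ (IH x) (is_derive_id x) Rmult_comm) (is_derive_const a x).
have -> : (p.[x] + p^`().[x] * x)%R = (p^`().[x])%R * x + p.[x]%R * 1 + 0 :> R.
  by rewrite -RplusE -RmultE; ring.
exact: D.
Qed.

Lemma ex_derive_n_horner (p : {poly R}) n x : ex_derive_n (horner p) n x.
Proof.
case: n => [|n] //=.
have Dn y : Derive_n (horner p) n y = (p^`(n)).[y]%R.
  elim: n y => [|n IH] y //=.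
  by rewrite (Derive_ext _ _ _ IH); apply: is_derive_unique (is_derive_horner _ _).
exists (p^`(n)^`()).[x]%R; apply: is_derive_ext (is_derive_horner _ _) => y.
by rewrite Dn.
Qed.

Definition poly_pt (X Y Z : {poly R}) (u : R) : pt := (X.[u], Y.[u], Z.[u])%R.

Definition poly_curve (X Y Z : {poly R}) (p : pt) : Prop := exists u, p = poly_pt X Y Z u.

Definition comp_poly3 (X Y Z : {poly R}) (P : poly3) : {poly R} :=
  foldr (fun m q => m.1%:P * X ^+ m.2.1.1 * Y ^+ m.2.1.2 * Z ^+ m.2.2 + q)%R 0%R P.

Lemma horner_comp_poly3 X Y Z P u :
  (comp_poly3 X Y Z P).[u]%R = eval3 P (poly_pt X Y Z u).
Proof.
elim: P => [|[a [[i j] k]] P IH] /=; first by rewrite horner0.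
by rewrite hornerD !hornerM hornerC !horner_exp IH /= !RpowE.
Qed.

Lemma algebraic_set_poly_trace X Y Z {A : pt -> Prop} : algebraic_set A ->
  (forall u, A (poly_pt X Y Z u)) \/
  exists f : {poly R}, f != 0%R /\ forall u, A (poly_pt X Y Z u) -> f.[u]%R = 0.
Proof.
move=> [L AL].
case: (classic (exists P, In P L /\ comp_poly3 X Y Z P <> 0%R)) => [[P [PL P0]]|L0].
  right; exists (comp_poly3 X Y Z P); split; first exact/eqP.
  by move=> u /AL /Forall_forall /(_ P PL); rewrite horner_comp_poly3.
left => u; apply/AL/Forall_forall => P PL.
rewrite -horner_comp_poly3 (_ : comp_poly3 X Y Z P = 0%R) ?horner0 //.
by apply: NNPP => P0; apply: L0; exists P.
Qed.

Lemma irreducible_poly_curve X Y Z (C : pt -> Prop) :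
  algebraic_set C -> (forall p, C p <-> poly_curve X Y Z p) -> irreducible_set C.
Proof.
move=> algC eqC; split; first done.
split; first by exists (poly_pt X Y Z 0); apply/eqC; exists 0.
move=> A B algA algB CAB.
have inAB u : A (poly_pt X Y Z u) \/ B (poly_pt X Y Z u) by apply/CAB/eqC; exists u.
case: (algebraic_set_poly_trace X Y Z algA) => [Aall|[f [f0 fA]]].
  by left => p /eqC [u ->].
case: (algebraic_set_poly_trace X Y Z algB) => [Ball|[g [g0 gB]]].
  by right => p /eqC [u ->].
have /eqP : (f * g = 0)%R.
  apply: poly_eq0_of_horner => u; rewrite hornerM.
  by case: (inAB u) => [/fA -> | /gB ->]; rewrite ?mul0r ?mulr0.
by rewrite mulf_eq0 (negbTE f0) (negbTE g0).
Qed.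

Lemma size_polyD_le n (p q : {poly R}) :
  (size p <= n)%N -> (size q <= n)%N -> (size (p + q)%R <= n)%N.
Proof. by move=> sp sq; rewrite (leq_trans (size_polyD _ _)) // geq_max sp. Qed.

Lemma size_scale_le n (k : R) (p : {poly R}) : (size p <= n)%N -> (size (k *: p)%R <= n)%N.
Proof. exact: leq_trans (size_scale_leq _ _). Qed.

Lemma poly_curve_plane_section_le (X Y Z : {poly R}) (n : nat) (proj : pt -> R)
  (C : pt -> Prop) (a b c d : R) :
  (size X <= n.+1)%N -> (size Y <= n.+1)%N -> (size Z <= n.+1)%N ->
  (forall u, proj (poly_pt X Y Z u) = u) ->
  (forall p, C p <-> poly_curve X Y Z p) ->
  (exists l0 : list pt, forall p, C p /\ plane a b c d p -> In p l0) ->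
  forall l : list pt, NoDup l -> (forall p, In p l -> C p /\ plane a b c d p) ->
  (length l <= n)%coq_nat.
Proof.
move=> sX sY sZ projK eqC [l0 l0C] l l_NoDup lC.
pose h := (a *: X + b *: Y + c *: Z - d%:P)%R.
have h_plane u : plane a b c d (poly_pt X Y Z u) <-> h.[u]%R = 0.
  have -> : h.[u]%R = a * X.[u]%R + b * Y.[u]%R + c * Z.[u]%R - d :> R by rewrite !hornerE.
  by rewrite /plane /poly_pt; split => ?; lra.
have proj_inj : Injective (poly_pt X Y Z) by move=> u v /(f_equal proj); rewrite !projK.
case: (eqVneq h 0%R) => [h0|h_neq0].
  case: (injective_not_finite _ _ proj_inj); exists l0 => u.
  by apply: l0C; split; [apply/eqC; exists u | apply/h_plane; rewrite h0 horner0].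
have size_h : (size h <= n.+1)%N.
  rewrite /h !size_polyD_le ?size_scale_le // size_polyN.
  exact: leq_trans (size_polyC_leq1 _) _.
have in_curve p : In p l -> exists u, p = poly_pt X Y Z u /\ h.[u]%R = 0.
  by move=> /lC [/eqC [u ->] /h_plane]; exists u.
apply/leP; rewrite -ltnS (leq_trans _ size_h) // -(length_map proj l).
apply: NoDup_roots_length h_neq0 _ _.
- apply: Injective_map_NoDup_in l_NoDup => p q /in_curve [u [-> _]] /in_curve [v [-> _]].
  by rewrite !projK => ->.
- by move=> _ /in_map_iff [p [<- /in_curve [u [-> hu]]]]; rewrite projK.
Qed.

Lemma Derive_horner_shift (p : {poly R}) u0 t :
  Derive (fun t => horner p (t + u0)) t = horner p^`() (t + u0).
Proof.
have /= -> := Derive_n_comp_trans (horner p) 1 t u0.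
exact: is_derive_unique (is_derive_horner _ _).
Qed.

Definition linear_parameter (α β : R) (X Y : {poly R}) : Prop :=
  forall u, α * X.[u]%R + β * Y.[u]%R = u.

Lemma linear_parameter_deriv {α β : R} {X Y : {poly R}} : linear_parameter α β X Y ->
  forall u, α * (X^`()).[u]%R + β * (Y^`()).[u]%R = 1.
Proof.
move=> XY u.
have XY' : (α *: X + β *: Y = 'X)%R.
  apply/eqP; rewrite -subr_eq0; apply/eqP/poly_eq0_of_horner => v.
  by rewrite !hornerE; to_Rstd; rewrite XY Rminus_diag.
by have := f_equal (fun q => (q^`()).[u]%R) XY'; rewrite /= !derivE !hornerE.
Qed.

Lemma smooth_branch_poly_curve {α β : R} {X Y Z : {poly R}} {u0 d : R} :
  0 < d -> linear_parameter α β X Y ->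
  smooth_branch (fun t => horner X (t + u0)) (fun t => horner Y (t + u0))
    (fun t => horner Z (t + u0)) (poly_pt X Y Z u0) d.
Proof.
move=> d_pos XY; split; first done.
split.
  by move=> n t _; split; [|split]; apply: ex_derive_n_comp_trans; apply: ex_derive_n_horner.
split; first by rewrite /poly_pt /= !add0r.
split.
  move=> t _ [dX [dY _]]; have := linear_parameter_deriv XY (t + u0).
  by rewrite -!Derive_horner_shift dX dY => ?; lra.
move=> t1 t2 _ _ [X12 Y12 _].
by have := XY (t1 + u0); rewrite X12 Y12 XY => /addIr ->.
Qed.

Lemma linear_parameter_dist2 {α β : R} {X1 Y1 Z1 X2 Y2 Z2 : {poly R}} {u1 u2 : R} :
  α ^ 2 + β ^ 2 = 1 -> linear_parameter α β X1 Y1 -> linear_parameter α β X2 Y2 ->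
  (u1 - u2) ^ 2 <= dist2 (poly_pt X1 Y1 Z1 u1) (poly_pt X2 Y2 Z2 u2).
Proof.
move=> αβ1 XY1 XY2; rewrite /dist2 /poly_pt.
set a := X1.[u1]%R - X2.[u2]%R; set b := Y1.[u1]%R - Y2.[u2]%R.
have -> : u1 - u2 = α * a + β * b by rewrite /a /b -{1}(XY1 u1) -{1}(XY2 u2); ring.
have : (α * a + β * b) ^ 2 + (α * b - β * a) ^ 2 = (α ^ 2 + β ^ 2) * (a ^ 2 + b ^ 2) by ring.
have := pow2_ge_0 (α * b - β * a); have := pow2_ge_0 (Z1.[u1]%R - Z2.[u2]%R).
rewrite αβ1; lra.
Qed.

(* The linear parameter is 1-Lipschitz for the Euclidean distance, so the
   neighbourhood and the parameter interval can both have radius 1. *)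
Lemma ordinary_real_node_poly_curves (T : pt -> Prop) (α β : R)
    (X1 Y1 Z1 X2 Y2 Z2 : {poly R}) (u0 : R) :
  α ^ 2 + β ^ 2 = 1 -> linear_parameter α β X1 Y1 -> linear_parameter α β X2 Y2 ->
  poly_pt X1 Y1 Z1 u0 = poly_pt X2 Y2 Z2 u0 ->
  not_parallel (X1^`()).[u0]%R (Y1^`()).[u0]%R (Z1^`()).[u0]%R
               (X2^`()).[u0]%R (Y2^`()).[u0]%R (Z2^`()).[u0]%R ->
  (forall q, T q <-> poly_curve X1 Y1 Z1 q \/ poly_curve X2 Y2 Z2 q) ->
  ordinary_real_node T (poly_pt X1 Y1 Z1 u0).
Proof.
move=> αβ1 XY1 XY2 meet tangents eqT.
split; first by apply/eqT; left; exists u0.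
exists 1, 1, (fun t => horner X1 (t + u0)), (fun t => horner Y1 (t + u0)),
  (fun t => horner Z1 (t + u0)), (fun t => horner X2 (t + u0)),
  (fun t => horner Y2 (t + u0)), (fun t => horner Z2 (t + u0)).
split; first lra.
split; first exact: smooth_branch_poly_curve Rlt_0_1 XY1.
split; first by rewrite meet; exact: smooth_branch_poly_curve Rlt_0_1 XY2.
split; first by rewrite !Derive_horner_shift !add0r.
move=> q near_q; split.
- have near_u X Y Z u : linear_parameter α β X Y -> q = poly_pt X Y Z u -> -1 < u - u0 < 1.
    move=> XY q_u; have : (u - u0) ^ 2 < 1.
      apply: Rle_lt_trans (linear_parameter_dist2 (Z1 := Z) (Z2 := Z1) αβ1 XY XY1) _.
      by rewrite -q_u; lra.
    by move=> ?; split; nra.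
  move=> /eqT [[u q_u]|[u q_u]]; exists (u - u0); rewrite subrK.
    by split; [exact: near_u XY1 q_u | left].
  by split; [exact: near_u XY2 q_u | right].
- by move=> [t [_ [-> | ->]]]; apply/eqT; [left | right]; exists (t + u0).
Qed.

Lemma quadratic_roots (b q : R) : 0 < q ->
  exists l : list R, NoDup l /\ length l = 2%nat /\
    forall u, u ^ 2 + b * u - q = 0 <-> In u l.
Proof.
move=> q_pos; set δ := sqrt (b ^ 2 + 4 * q).
have δ_pos : 0 < δ by apply: sqrt_lt_R0; nra.
have δ2 : δ * δ = b ^ 2 + 4 * q by apply: sqrt_sqrt; nra.
exists [:: (- b + δ) / 2; (- b - δ) / 2]; split; [|split; first by []].
  constructor; first by move=> /= -[E|[]]; lra.
  by constructor; [move=> [] | constructor].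
move=> u; have -> : u ^ 2 + b * u - q = (u - (- b + δ) / 2) * (u - (- b - δ) / 2).
  by transitivity (u ^ 2 + b * u + (b ^ 2 - δ * δ) / 4); [rewrite δ2 | ]; field.
split; first by case/Rmult_integral => ?; [left | right; left]; lra.
case=> [<-|[<-|[]]]; [apply: Rmult_eq_0_compat_r | apply: Rmult_eq_0_compat_l]; lra.
Qed.

Lemma quadratic_pair_roots (b1 b2 q : R) : 0 < q -> b1 <> b2 ->
  exists l : list R, NoDup l /\ length l = 4%nat /\
    forall u, u ^ 2 + b1 * u - q = 0 \/ u ^ 2 + b2 * u - q = 0 <-> In u l.
Proof.
move=> q_pos b12.
have [l1 [l1_NoDup [l1_len l1_roots]]] := quadratic_roots b1 q q_pos.
have [l2 [l2_NoDup [l2_len l2_roots]]] := quadratic_roots b2 q q_pos.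
exists (l1 ++ l2); split; last split.
- apply: NoDup_app => // u /l1_roots Q1 /l2_roots Q2.
  have /Rmult_integral [|u0] : (b1 - b2) * u = 0 by lra.
    by lra.
  by subst u; lra.
- by rewrite length_app l1_len l2_len.
- by move=> u; rewrite in_app_iff l1_roots l2_roots.
Qed.

Section TrisectorComponents.

Variables c s Rad : R.
Hypothesis cs1 : c ^ 2 + s ^ 2 = 1.
Hypothesis Rad_pos : 0 < Rad.
Hypothesis s_neq0 : s <> 0.

Definition ucoord (p : pt) : R := let '(x, y, _) := p in x * c + y * s.

Definition vcoord (p : pt) : R := let '(x, y, _) := p in x * s - y * c.

Definition component (e : R) (p : pt) : Prop :=
  let '(x, y, z) := p in
  (x * c + y * s) ^ 2 - Rad ^ 2 - 2 * Rad * e * (x * s - y * c) = 0 /\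
  y ^ 2 - (x * s - y * c) ^ 2 + 2 * z - 1 = 0.

Lemma quartic_split x y z :
  y ^ 2 - (x * s - y * c) ^ 2 + 2 * z - 1 = 0 /\
  (x ^ 2 - 2 * z + Rad ^ 2 + 1) ^ 2 - 4 * Rad ^ 2 * (x ^ 2 + y ^ 2) = 0 <->
  component 1 (x, y, z) \/ component (-1) (x, y, z).
Proof.
rewrite /component; set u := x * c + y * s; set v := x * s - y * c.
have factor : y ^ 2 - v ^ 2 + 2 * z - 1 = 0 ->
    (x ^ 2 - 2 * z + Rad ^ 2 + 1) ^ 2 - 4 * Rad ^ 2 * (x ^ 2 + y ^ 2) =
    (u ^ 2 - Rad ^ 2 - 2 * Rad * 1 * v) * (u ^ 2 - Rad ^ 2 - 2 * Rad * -1 * v).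
  have xy : x ^ 2 + y ^ 2 = u ^ 2 + v ^ 2.
    by transitivity ((x ^ 2 + y ^ 2) * (c ^ 2 + s ^ 2)); [rewrite cs1 | rewrite /u /v]; ring.
  by move=> E2; rewrite xy (_ : x ^ 2 - 2 * z + Rad ^ 2 + 1 = u ^ 2 + Rad ^ 2); [ring | lra].
split.
  move=> [E2]; rewrite factor // => /Rmult_integral [E1|E1]; [left | right]; exact: conj.
by move=> [[E1 E2]|[E1 E2]]; split => //; rewrite factor // E1; ring.
Qed.

Lemma algebraic_set_component e : algebraic_set (component e).
Proof.
pose P1 : poly3 :=
  [:: (c ^ 2, (2, 0, 0)%nat); (2 * c * s, (1, 1, 0)%nat); (s ^ 2, (0, 2, 0)%nat);
      (- (2 * Rad * e * s), (1, 0, 0)%nat); (2 * Rad * e * c, (0, 1, 0)%nat);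
      (- Rad ^ 2, (0, 0, 0)%nat)].
pose P2 : poly3 :=
  [:: (1 - c ^ 2, (0, 2, 0)%nat); (- s ^ 2, (2, 0, 0)%nat); (2 * s * c, (1, 1, 0)%nat);
      (2, (0, 0, 1)%nat); (-1, (0, 0, 0)%nat)].
exists [:: P1; P2] => -[[x y] z]; rewrite !Forall_cons_iff.
have -> : eval3 P1 (x, y, z) = (x * c + y * s) ^ 2 - Rad ^ 2 - 2 * Rad * e * (x * s - y * c).
  by rewrite /=; ring.
have -> : eval3 P2 (x, y, z) = y ^ 2 - (x * s - y * c) ^ 2 + 2 * z - 1.
  by rewrite /=; ring.
by split => [[E1 E2]|[E1 [E2 _]]]; do ?split.
Qed.

Definition vpar (e u : R) : R := (u ^ 2 - Rad ^ 2) / (2 * Rad * e).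

Definition Vpoly (e : R) : {poly R} :=
  let k := / (2 * Rad * e) in (k *: ('X^2 - (Rad ^+ 2)%:P))%R.
Definition Xpoly (e : R) : {poly R} := (c *: 'X + s *: Vpoly e)%R.
Definition Ypoly (e : R) : {poly R} := (s *: 'X - c *: Vpoly e)%R.
Definition Zpoly (e : R) : {poly R} :=
  let h := / 2 in (h *: (1%:P - Ypoly e ^+ 2 + Vpoly e ^+ 2))%R.

Definition branch (e u : R) : pt := poly_pt (Xpoly e) (Ypoly e) (Zpoly e) u.

Lemma horner_Vpoly e u : (Vpoly e).[u]%R = vpar e u :> R.
Proof. by rewrite /Vpoly !hornerE; to_Rstd; rewrite /vpar /Rdiv; ring. Qed.

Lemma horner_Xpoly e u : (Xpoly e).[u]%R = u * c + vpar e u * s :> R.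
Proof.
by rewrite /Xpoly hornerD !(hornerZ c, hornerZ s) hornerX horner_Vpoly; to_Rstd; ring.
Qed.

Lemma horner_Ypoly e u : (Ypoly e).[u]%R = u * s - vpar e u * c :> R.
Proof.
rewrite /Ypoly hornerD hornerN !(hornerZ c, hornerZ s) hornerX horner_Vpoly.
by to_Rstd; ring.
Qed.

Lemma branchE e u : let v := vpar e u in let y := u * s - v * c in
  branch e u = (u * c + v * s, y, (1 - y ^ 2 + v ^ 2) / 2).
Proof.
rewrite /branch /poly_pt horner_Xpoly horner_Ypoly /Zpoly (hornerZ (/ 2)) 2!hornerD hornerN.
rewrite !horner_exp horner_Ypoly horner_Vpoly hornerC; to_Rstd.
by congr (_, _); rewrite Rmult_comm.
Qed.

Lemma size_Vpoly e : (size (Vpoly e) <= 3)%N.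
Proof.
apply: size_scale_le; apply: size_polyD_le; first by rewrite size_polyXn.
by rewrite size_polyN; exact: leq_trans (size_polyC_leq1 _) _.
Qed.

Lemma size_Xpoly e : (size (Xpoly e) <= 3)%N.
Proof. by apply: size_polyD_le; apply: size_scale_le; [rewrite size_polyX | exact: size_Vpoly]. Qed.

Lemma size_Ypoly e : (size (Ypoly e) <= 3)%N.
Proof.
apply: size_polyD_le; first by apply: size_scale_le; rewrite size_polyX.
by rewrite size_polyN; apply: size_scale_le; exact: size_Vpoly.
Qed.

Lemma size_Zpoly e : (size (Zpoly e) <= 5)%N.
Proof.
have size_sqr (p : {poly R}) : (size p <= 3)%N -> (size (p ^+ 2)%R <= 5)%N.
  by move=> sp; rewrite expr2 (leq_trans (size_polyMleq _ _)) //; lia.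
apply: size_scale_le; apply: size_polyD_le; last exact/size_sqr/size_Vpoly.
apply: size_polyD_le; first exact: leq_trans (size_polyC_leq1 _) _.
by rewrite size_polyN; exact/size_sqr/size_Ypoly.
Qed.

Lemma reflect_coordsK u v :
  (u * c + v * s) * c + (u * s - v * c) * s = u /\
  (u * c + v * s) * s - (u * s - v * c) * c = v.
Proof.
split.
- by transitivity (u * (c ^ 2 + s ^ 2)); [ring | rewrite cs1; ring].
- by transitivity (v * (c ^ 2 + s ^ 2)); [ring | rewrite cs1; ring].
Qed.

Lemma linear_parameter_branch e : linear_parameter c s (Xpoly e) (Ypoly e).
Proof.
move=> u; rewrite horner_Xpoly horner_Ypoly.
by have [E _] := reflect_coordsK u (vpar e u); lra.
Qed.

Lemma ucoord_branch e u : ucoord (branch e u) = u.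
Proof. by have := linear_parameter_branch e u; rewrite /ucoord /branch /poly_pt; lra. Qed.

Lemma vcoord_branch e u : vcoord (branch e u) = vpar e u.
Proof. by rewrite branchE /=; have [_ ->] := reflect_coordsK u (vpar e u). Qed.

Lemma branch_inj e : Injective (branch e).
Proof. by move=> u1 u2 /(f_equal ucoord); rewrite !ucoord_branch. Qed.

Lemma component_iff e p :
  e <> 0 -> component e p <-> poly_curve (Xpoly e) (Ypoly e) (Zpoly e) p.
Proof.
move=> e0; split.
- case: p => [[x y] z] [eq1 eq2]; exists (x * c + y * s).
  have v_eq : vpar e (x * c + y * s) = x * s - y * c.
    rewrite /vpar (_ : _ ^ 2 - _ = 2 * Rad * e * (x * s - y * c)); last lra.
    by field; split; lra.
  have [ex ey] := reflect_coordsK x y.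
  rewrite -/(branch e _) branchE /= v_eq ex ey.
  by congr (_, _); lra.
- move=> [u ->]; rewrite -/(branch e u) branchE /=.
  have [-> ->] := reflect_coordsK u (vpar e u).
  by split; [rewrite /vpar; field; lra | lra].
Qed.

Lemma vpar_eq0 e u : u ^ 2 = Rad ^ 2 -> vpar e u = 0.
Proof. by move=> u2; rewrite /vpar u2 Rminus_diag /Rdiv Rmult_0_l. Qed.

Lemma branch_at_Rad e e' u : u ^ 2 = Rad ^ 2 -> branch e u = branch e' u.
Proof. by move=> u2; rewrite !branchE /= !vpar_eq0. Qed.

Lemma component_branch e u : e <> 0 -> component e (branch e u).
Proof. by move=> e0; apply/component_iff => //; exists u. Qed.

Lemma branch_at_RadE e u :
  u ^ 2 = Rad ^ 2 -> branch e u = (u * c, u * s, (1 - u ^ 2 * s ^ 2) / 2).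
Proof. by move=> u2; rewrite branchE /= vpar_eq0 //; congr (_, _, _); field. Qed.

Lemma component_inter e e' : e <> 0 -> e' <> 0 -> e <> e' -> forall p,
  component e p /\ component e' p <-> p = branch e Rad \/ p = branch e (- Rad).
Proof.
move=> e0 e'0 ee' p; split.
- move=> [/(component_iff _ _ e0) [u ->] /(component_iff _ _ e'0) [u' E]].
  have uu' : u = u' by have := f_equal ucoord E; rewrite -/(branch _ _) !ucoord_branch.
  subst u'; have vv' : vpar e u = vpar e' u.
    by have := f_equal vcoord E; rewrite -!/(branch _ _) !vcoord_branch.
  have : (u ^ 2 - Rad ^ 2) * (e' - e) = 0.
    transitivity (2 * Rad * e * e' * (vpar e u - vpar e' u)); first by rewrite /vpar; field; lra.
    by rewrite vv' Rminus_diag Rmult_0_r.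
  case/Rmult_integral => [u2|]; last lra.
  have /Rmult_integral [uR|uR] : (u - Rad) * (u + Rad) = 0 by lra.
    by left; congr branch; lra.
  by right; congr branch; lra.
- have Rad2 : (- Rad) ^ 2 = Rad ^ 2 by ring.
  move=> [->|->]; (split; [|rewrite (branch_at_Rad e e') //]); exact: component_branch.
Qed.

Lemma component_not_sub e e' : e <> 0 -> e' <> 0 -> e <> e' ->
  ~ (forall p, component e p -> component e' p).
Proof.
move=> e0 e'0 ee' sub.
have /(component_inter _ _ e0 e'0 ee' _) : component e (branch e 0) /\ component e' (branch e 0).
  by split; [|apply: sub]; exact: component_branch.
by case=> /branch_inj; lra.
Qed.

Lemma one_pm_c_neq0 : 1 + c <> 0 /\ 1 - c <> 0.
Proof. have : 0 < s * s by apply: Rsqr_pos_lt. by move=> ?; split; nra. Qed.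

Definition bplus (e : R) : R := - (2 * Rad * e * s) / (1 + c).
Definition bminus (e : R) : R := 2 * Rad * e * s / (1 - c).

(* 2 z - 1 = v^2 - y^2 = (v (1 + c) - u s) (v (1 - c) + u s), and each factor is
   a nonzero multiple of one of the two quadratics. *)
Lemma plane_half_branch e u : e <> 0 ->
  plane 0 0 1 (1 / 2) (branch e u) <->
  u ^ 2 + bplus e * u - Rad ^ 2 = 0 \/ u ^ 2 + bminus e * u - Rad ^ 2 = 0.
Proof.
move=> e0; have [c1 c2] := one_pm_c_neq0; have s2 : 0 < s * s by apply: Rsqr_pos_lt.
have Re0 : 2 * Rad * e <> 0 by apply: Rmult_integral_contrapositive_currified; lra.
set Q1 := _ ^ 2 + bplus e * u - _; set Q2 := _ ^ 2 + bminus e * u - _.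
set k := s ^ 2 / (2 * Rad * e) ^ 2.
have k_pos : 0 < k by apply: Rdiv_lt_0_compat; [nra | apply: pow2_gt_0].
rewrite branchE /plane; set v := vpar e u.
have -> : 0 * (u * c + v * s) + 0 * (u * s - v * c) +
    1 * ((1 - (u * s - v * c) ^ 2 + v ^ 2) / 2) = 1 / 2 + k * (Q1 * Q2) / 2.
  rewrite /k -(_ : (1 + c) * (1 - c) = s ^ 2); last by transitivity (1 - c ^ 2); [ring | lra].
  by rewrite /Q1 /Q2 /v /vpar /bplus /bminus; field; do !split => //; lra.
split => [E | QQ]; last by case: QQ => ->; rewrite ?Rmult_0_l ?Rmult_0_r; lra.
have /Rmult_integral [|/Rmult_integral //] : k * (Q1 * Q2) = 0 by lra.
lra.
Qed.

Lemma bplus_neq_bminus e : e <> 0 -> bplus e <> bminus e.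
Proof.
move=> e0 b12; have [c1 c2] := one_pm_c_neq0.
have : 4 * Rad * e * s = 0.
  transitivity ((1 + c) * (1 - c) * (bminus e - bplus e)); first by rewrite /bplus /bminus; field.
  by rewrite b12 Rminus_diag Rmult_0_r.
by case/Rmult_integral => [/Rmult_integral [|]|]; lra.
Qed.

Lemma curve_degree_component e : e <> 0 -> curve_degree (component e) 4.
Proof.
move=> e0; split.
  have [l [l_NoDup [l_len l_roots]]] :=
    quadratic_pair_roots (bplus e) (bminus e) (Rad ^ 2) ltac:(nra) (bplus_neq_bminus _ e0).
  exists 0, 0, 1, (1 / 2), (List.map (branch e) l).
  split; first by rewrite /nonzero3; lra.
  split; first exact: Injective_map_NoDup (branch_inj e) l_NoDup.
  split; first by rewrite length_map.
  move=> p; split.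
    move=> [/(component_iff _ _ e0) [u ->] /(plane_half_branch _ _ e0) /l_roots].
    exact: in_map.
  move=> /in_map_iff [u [<- /l_roots /(plane_half_branch _ _ e0) on_plane]].
  by split; first exact: component_branch.
move=> a b cc d _.
apply: (poly_curve_plane_section_le (Xpoly e) (Ypoly e) (Zpoly e) 4 ucoord).
- exact: leq_trans (size_Xpoly e) _.
- exact: leq_trans (size_Ypoly e) _.
- exact: size_Zpoly.
- exact: ucoord_branch.
- by move=> p; apply: component_iff.
Qed.

Lemma irreducible_component e : e <> 0 -> irreducible_set (component e).
Proof.
move=> e0; apply: (irreducible_poly_curve (Xpoly e) (Ypoly e) (Zpoly e)).
  exact: algebraic_set_component.
by move=> p; apply: component_iff.
Qed.

Lemma horner_deriv_Vpoly e u : e <> 0 -> ((Vpoly e)^`()).[u]%R = u / (Rad * e) :> R.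
Proof.
by move=> e0; rewrite /Vpoly derivZ derivB derivXn derivC !hornerE; to_Rstd; field; lra.
Qed.

Lemma horner_deriv_Xpoly e u : e <> 0 ->
  ((Xpoly e)^`()).[u]%R = c + s * (u / (Rad * e)) :> R.
Proof.
move=> e0; rewrite /Xpoly derivD (derivZ c) (derivZ s) derivX hornerD !(hornerZ c, hornerZ s).
by rewrite horner_deriv_Vpoly // hornerC; to_Rstd; ring.
Qed.

Lemma horner_deriv_Ypoly e u : e <> 0 ->
  ((Ypoly e)^`()).[u]%R = s - c * (u / (Rad * e)) :> R.
Proof.
move=> e0; rewrite /Ypoly derivB (derivZ c) (derivZ s) derivX hornerD hornerN.
by rewrite !(hornerZ c, hornerZ s) horner_deriv_Vpoly // hornerC; to_Rstd; ring.
Qed.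

Lemma ordinary_real_node_branches (T : pt -> Prop) u0 : u0 ^ 2 = Rad ^ 2 ->
  (forall q, T q <-> component 1 q \/ component (-1) q) ->
  ordinary_real_node T (branch 1 u0).
Proof.
move=> u0R eqT.
have [e1 e2] : 1 <> 0 /\ -1 <> 0 by split; lra.
apply: (ordinary_real_node_poly_curves T c s (Xpoly 1) (Ypoly 1) (Zpoly 1)
  (Xpoly (-1)) (Ypoly (-1)) (Zpoly (-1)) u0 cs1).
- exact: linear_parameter_branch.
- exact: linear_parameter_branch.
- exact: branch_at_Rad.
- rewrite !horner_deriv_Xpoly // !horner_deriv_Ypoly // => -[_ [_ cross]].
  have : u0 / Rad * 2 * (c ^ 2 + s ^ 2) = 0 by rewrite -cross; field; lra.
  rewrite cs1 => /Rmult_integral [/Rmult_integral [|]|]; try lra.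
  by rewrite /Rdiv => /Rmult_integral [u00|/Rinv_neq_0_compat]; [subst u0; nra | lra].
- by move=> q; rewrite eqT !component_iff.
Qed.

End TrisectorComponents.

Lemma cpar_spar_sqr t : cpar t ^ 2 + spar t ^ 2 = 1.
Proof. by rewrite /cpar /spar; field; nra. Qed.

Lemma spar_neq0 t : t <> 0 -> spar t <> 0.
Proof.
move=> t0; rewrite /spar /Rdiv; apply: Rmult_integral_contrapositive_currified; first lra.
by apply: Rinv_neq_0_compat; nra.
Qed.

Lemma trisector_split Rad t p :
  trisector Rad t p <->
  component (cpar t) (spar t) Rad 1 p \/ component (cpar t) (spar t) Rad (-1) p.
Proof. by case: p => [[x y] z]; exact: quartic_split (cpar_spar_sqr t) x y z. Qed.

Theorem theorem6 (Rad t : R) (hR : 0 < Rad) (ht : t <> 0) :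
  let c := cpar t in
  let s := spar t in
  let T := trisector Rad t in
  let P1 : pt := (Rad * c, Rad * s, (1 - Rad ^ 2 * s ^ 2) / 2) in
  let P2 : pt := (- (Rad * c), - (Rad * s), (1 - Rad ^ 2 * s ^ 2) / 2) in
  (exists C1 C2 : pt -> Prop,
     irreducible_set C1 /\ irreducible_set C2 /\
     (forall p, T p <-> C1 p \/ C2 p) /\
     ~ (forall p, C1 p -> C2 p) /\ ~ (forall p, C2 p -> C1 p) /\
     curve_degree C1 4 /\ curve_degree C2 4 /\
     P1 <> P2 /\
     (forall p, C1 p /\ C2 p <-> p = P1 \/ p = P2)) /\
  ordinary_real_node T P1 /\ ordinary_real_node T P2.
Proof.
move=> c s T P1 P2.
have cs1 : c ^ 2 + s ^ 2 = 1 := cpar_spar_sqr t.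
have s0 : s <> 0 := spar_neq0 t ht.
have [e1 e2 e12 e21] : [/\ 1 <> 0, -1 <> 0, 1 <> -1 & -1 <> 1] by split; lra.
have RadR : (- Rad) ^ 2 = Rad ^ 2 by ring.
have eP1 : P1 = branch c s Rad 1 Rad by rewrite branch_at_RadE.
have eP2 : P2 = branch c s Rad 1 (- Rad).
  by rewrite /P2 branch_at_RadE // RadR; congr (_, _, _); rewrite /c /s; ring.
split; [|split]; last first.
- by rewrite eP2; apply: ordinary_real_node_branches => // q; apply: trisector_split.
- by rewrite eP1; apply: ordinary_real_node_branches => // q; apply: trisector_split.
exists (component c s Rad 1), (component c s Rad (-1)).
do 2 (split; first exact: irreducible_component).
split; first exact: trisector_split.
split; first exact: component_not_sub.
split; first exact: component_not_sub.
do 2 (split; first exact: curve_degree_component).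
split; first by rewrite eP1 eP2 => /branch_inj; lra.
by rewrite eP1 eP2; exact: component_inter.
Qed.
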